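(* Let $H$ and $K$ be separable Hilbert spaces, let $I,J\subseteq\mathbb{Z}$, let $\{H_i\}_{i\in I}$ and $\{K_j\}_{j\in J}$ be families of Hilbert spaces, let $\{V_i\}_{i\in I}$ be closed subspaces of $H$ and $\{W_j\}_{j\in J}$ closed subspaces of $K$, let $\Lambda_i\in\mathcal{B}(H,H_i)$, $\Gamma_j\in\mathcal{B}(K,K_j)$, and let $v_i>0$, $w_j>0$ be weights. Then $\Lambda=\{(V_i,\Lambda_i,v_i)\}_{i\in I}$ and $\Gamma=\{(W_j,\Gamma_j,w_j)\}_{j\in J}$ are g-fusion frames for $H$ and $K$ with respect to $\{H_i\}_{i\in I}$ and $\{K_j\}_{j\in J}$, respectively, if and only if the family $\Lambda\otimes\Gamma=\{(V_i\otimes W_j,\ \Lambda_i\otimes\Gamma_j,\ v_iw_j)\}_{i,j}$ is a g-fusion frame for $H\otimes K$ with respect to $\{H_i\otimes K_j\}_{i,j}$.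
   Context: For a closed subspace $V$, $P_V$ denotes the orthogonal projection onto $V$. $H\otimes K$ is the Hilbert space tensor product, with $\langle f\otimes g,f'\otimes g'\rangle=\langle f,f'\rangle\langle g,g'\rangle$ and $\|f\otimes g\|=\|f\|\,\|g\|$. For bounded operators $Q:H\to H'$, $T:K\to K'$, $Q\otimes T:H\otimes K\to H'\otimes K'$ is the bounded operator with $(Q\otimes T)(f\otimes g)=Qf\otimes Tg$. For closed subspaces $V\subseteq H$, $W\subseteq K$, $V\otimes W$ is the corresponding closed subspace of $H\otimes K$, and $P_{V\otimes W}=P_V\otimes P_W$. A family $\{(V_i,\Lambda_i,v_i)\}_{i\in I}$ (with $V_i\subseteq H$ closed, $\Lambda_i\in\mathcal{B}(H,H_i)$, $v_i>0$) is a g-fusion frame for $H$ with respect to $\{H_i\}$ if there are constants $0<A\le B<\infty$ with $A\|f\|^2\le\sum_{i\in I}v_i^2\|\Lambda_iP_{V_i}f\|^2\le B\|f\|^2$ for all $f\in H$. The family $\Lambda\otimes\Gamma$ is called a g-fusion frame for $H\otimes K$ with respect to $\{H_i\otimes K_j\}_{i,j}$ if there exist constants $0<A\le B<\infty$ such that for all $f\in H$, $g\in K$: $A\|f\otimes g\|^2\le\sum_{i,j}v_i^2w_j^2\|(\Lambda_i\otimes\Gamma_j)P_{V_i\otimes W_j}(f\otimes g)\|^2\le B\|f\otimes g\|^2$ (the inequalities are required on elementary tensors $f\otimes g$). *)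

From HB Require Import structures.
From mathcomp Require Import all_boot all_order all_algebra.
From mathcomp Require Import complex.
From mathcomp Require Import classical_sets reals constructive_ereal ereal esum.
From Stdlib Require Import ClassicalEpsilon.

Set Implicit Arguments.
Unset Strict Implicit.
Unset Printing Implicit Defensive.

Import Order.TTheory GRing.Theory Num.Theory.
Local Open Scope ring_scope.
Local Open Scope classical_set_scope.

Record Hilb (R : realType) := Hilb_of {
  hcar :> lmodType (R[i]);
  hinner : hcar -> hcar -> R[i];
  hinner_linl : forall (a : R[i]) (x y z : hcar),
      hinner (a *: x + y) z = a * hinner x z + hinner y z;
  hinner_conj : forall x y : hcar, hinner y x = conjc (hinner x y);
  hinner_ge0 : forall x : hcar, 0 <= hinner x x;
  hinner_eq0 : forall x : hcar, hinner x x = 0 -> x = 0;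
  hinner_complete : forall u : nat -> hcar,
      (forall e : R, 0 < e -> exists N : nat, forall m n : nat,
          (N <= m)%N -> (N <= n)%N ->
          Num.sqrt (complex.Re (hinner (u m - u n) (u m - u n))) < e) ->
      exists l : hcar, forall e : R, 0 < e -> exists N : nat, forall n : nat,
          (N <= n)%N -> Num.sqrt (complex.Re (hinner (u n - l) (u n - l))) < e
}.

Section HilbertDefs.
Variable R : realType.

Definition hnorm (H : Hilb R) (x : H) : R :=
  Num.sqrt (complex.Re (hinner x x)).

Definition separable (H : Hilb R) : Prop :=
  exists d : nat -> H, forall (x : H) (e : R), 0 < e ->
    exists n : nat, hnorm (x - d n) < e.

Definition closed_subspace (H : Hilb R) (V : set H) : Prop :=
  [/\ V 0,
      (forall (a : R[i]) (x y : H), V x -> V y -> V (a *: x + y)) &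
      (forall (u : nat -> H) (l : H), (forall n, V (u n)) ->
         (forall e : R, 0 < e -> exists N : nat, forall n : nat,
            (N <= n)%N -> hnorm (u n - l) < e) -> V l)].

(* orthogonal projection onto V : the (unique, for closed V) p in V with
   x - p orthogonal to V *)
Definition orthproj (H : Hilb R) (V : set H) (x : H) : H :=
  epsilon (inhabits (0 : H))
    (fun p : H => V p /\ forall v : H, V v -> hinner (x - p) v = 0).

Definition bounded_op (H H' : Hilb R) (L : H -> H') : Prop :=
  exists M : R, forall x : H, hnorm (L x) <= M * hnorm x.

Definition gfusion_frame (H : Hilb R) (I : set int) (Hi : int -> Hilb R)
    (V : int -> set H) (Lam : forall i, {linear H -> Hi i}) (v : int -> R)
    : Prop :=
  exists A B : R, [/\ 0 < A, A <= B &
    forall f : H,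
      ((A * hnorm f ^+ 2)%:E <=
         \esum_(i in I) ((v i) ^+ 2 * hnorm (Lam i (orthproj (V i) f)) ^+ 2)%:E)%E
      /\
      (\esum_(i in I) ((v i) ^+ 2 * hnorm (Lam i (orthproj (V i) f)) ^+ 2)%:E
         <= (B * hnorm f ^+ 2)%:E)%E].

(* Hilbert tensor products, given abstractly by their universal data:  *)
(* HK together with t : H -> K -> HK (t f g = f (x) g) such that       *)
(* <f(x)g, f'(x)g'> = <f,f'><g,g'> and the span of the elementary      *)
(* tensors is dense in HK.  (This determines HK up to unitary iso.)    *)
Definition is_tensor (H K HK : Hilb R) (t : H -> K -> HK) : Prop :=
  (forall (f f' : H) (g g' : K),
      hinner (t f g) (t f' g') = hinner f f' * hinner g g') /\
  (forall (x : HK) (e : R), 0 < e ->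
     exists s : seq (H * K),
       hnorm (x - \sum_(p <- s) t p.1 p.2) < e).

Definition tensor_subspace (H K HK : Hilb R) (t : H -> K -> HK)
    (V : set H) (W : set K) : set HK :=
  [set x : HK | forall e : R, 0 < e ->
     exists s : seq (H * K),
       (forall p, p \in s -> V p.1 /\ W p.2) /\
       hnorm (x - \sum_(p <- s) t p.1 p.2) < e].

Definition is_tensor_op (H K HK H' K' HK' : Hilb R)
    (t : H -> K -> HK) (t' : H' -> K' -> HK')
    (Q : H -> H') (T : K -> K') (QT : {linear HK -> HK'}) : Prop :=
  bounded_op QT /\ forall (f : H) (g : K), QT (t f g) = t' (Q f) (T g).

(* Lam (x) Gam is a g-fusion frame for H (x) K w.r.t. {H_i (x) K_j}
   (inequalities required on elementary tensors f (x) g) *)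
Definition tensor_gfusion_frame (H K HK : Hilb R) (t : H -> K -> HK)
    (I J : set int) (HKij : int -> int -> Hilb R)
    (V : int -> set H) (W : int -> set K)
    (LG : forall i j, {linear HK -> HKij i j}) (v w : int -> R) : Prop :=
  exists A B : R, [/\ 0 < A, A <= B &
    forall (f : H) (g : K),
      ((A * hnorm (t f g) ^+ 2)%:E <=
         \esum_(ij in I `*` J)
           ((v ij.1 * w ij.2) ^+ 2 *
            hnorm (LG ij.1 ij.2
                     (orthproj (tensor_subspace t (V ij.1) (W ij.2)) (t f g)))
              ^+ 2)%:E)%E
      /\
      (\esum_(ij in I `*` J)
           ((v ij.1 * w ij.2) ^+ 2 *
            hnorm (LG ij.1 ij.2
                     (orthproj (tensor_subspace t (V ij.1) (W ij.2)) (t f g)))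
              ^+ 2)%:E
         <= (B * hnorm (t f g) ^+ 2)%:E)%E].

End HilbertDefs.

From HB Require Import structures.
From mathcomp Require Import all_boot all_order all_algebra complex.
From mathcomp Require Import classical_sets reals constructive_ereal ereal esum.
From mathcomp Require Import boolp cardinality fsbigop.
From mathcomp Require Import ring lra.
From Stdlib Require Import ClassicalEpsilon.

Set Implicit Arguments.
Unset Strict Implicit.
Unset Printing Implicit Defensive.

Import Order.TTheory GRing.Theory Num.Theory.
Local Open Scope ring_scope.
Local Open Scope complex_scope.
Local Open Scope classical_set_scope.

(* On elementary tensors everything factors.  The projection onto V (x) W
   sends f (x) g to P_V f (x) P_W g: the latter lies in V (x) W, and
   f (x) g - P_V f (x) P_W g is orthogonal to every v (x) w, hence to their
   closed span.  So the frame sum of Lam (x) Gam at f (x) g is the product of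
   the frame sums of Lam at f and of Gam at g, while
   ||f (x) g||^2 = ||f||^2 ||g||^2.  Products of frame bounds are frame bounds
   of the product; conversely, fixing g = g0 <> 0, whose frame sum is then a
   finite positive number, and dividing by it recovers frame bounds for Lam,
   and symmetrically for Gam.  As [orthproj] is defined by choice, the
   projection theorem for closed subspaces (through a minimizing sequence) is
   what guarantees that the chosen point is the orthogonal projection. *)

Section InnerProduct.
Variables (R : realType) (H : Hilb R).
Implicit Types (x y z : H) (a : R[i]).

Lemma hinnerDl x y z : hinner (x + y) z = hinner x z + hinner y z.
Proof. by have := hinner_linl 1 x y z; rewrite scale1r mul1r. Qed.

Lemma hinner0l z : hinner 0 z = 0.
Proof. by apply: (addrI (hinner 0 z)); rewrite -hinnerDl !addr0. Qed.

Lemma hinnerZl a x z : hinner (a *: x) z = a * hinner x z.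
Proof. by have := hinner_linl a x 0 z; rewrite addr0 hinner0l addr0. Qed.

Lemma hinnerNl x z : hinner (- x) z = - hinner x z.
Proof. by rewrite -scaleN1r hinnerZl mulN1r. Qed.

Lemma hinnerBl x y z : hinner (x - y) z = hinner x z - hinner y z.
Proof. by rewrite hinnerDl hinnerNl. Qed.

Lemma hinnerDr x y z : hinner z (x + y) = hinner z x + hinner z y.
Proof. by rewrite hinner_conj hinnerDl rmorphD /= -!hinner_conj. Qed.

Lemma hinnerZr a x z : hinner z (a *: x) = conjc a * hinner z x.
Proof. by rewrite hinner_conj hinnerZl rmorphM /= -hinner_conj. Qed.

Lemma hinner0r z : hinner z 0 = 0.
Proof. by rewrite hinner_conj hinner0l rmorph0. Qed.

Lemma hinnerNr x z : hinner z (- x) = - hinner z x.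
Proof. by rewrite hinner_conj hinnerNl rmorphN /= -hinner_conj. Qed.

Lemma hinnerBr x y z : hinner z (x - y) = hinner z x - hinner z y.
Proof. by rewrite hinnerDr hinnerNr. Qed.

Lemma hinner_sumr (I : Type) (r : seq I) (F : I -> H) z :
  hinner z (\sum_(i <- r) F i) = \sum_(i <- r) hinner z (F i).
Proof. by elim/big_rec2: _ => [|i b c _ <-]; rewrite ?hinner0r ?hinnerDr. Qed.

Definition rinner x y := complex.Re (hinner x y).
Definition sqnorm x := rinner x x.

Lemma rinnerC x y : rinner x y = rinner y x.
Proof. by rewrite /rinner (hinner_conj x y); case: (hinner x y). Qed.

Lemma rinnerDl x y z : rinner (x + y) z = rinner x z + rinner y z.
Proof. by rewrite /rinner hinnerDl raddfD. Qed.

Lemma rinnerDr x y z : rinner z (x + y) = rinner z x + rinner z y.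
Proof. by rewrite rinnerC rinnerDl !(rinnerC z). Qed.

Lemma rinnerNl x z : rinner (- x) z = - rinner x z.
Proof. by rewrite /rinner hinnerNl raddfN. Qed.

Lemma rinnerNr x z : rinner z (- x) = - rinner z x.
Proof. by rewrite rinnerC rinnerNl rinnerC. Qed.

Lemma rinnerZl (r : R) x z : rinner (r%:C *: x) z = r * rinner x z.
Proof. by rewrite /rinner hinnerZl; case: (hinner x z) => a b /=; rewrite mul0r subr0. Qed.

Lemma rinnerZr (r : R) x z : rinner z (r%:C *: x) = r * rinner z x.
Proof. by rewrite rinnerC rinnerZl rinnerC. Qed.

Lemma sqnorm_ge0 x : 0 <= sqnorm x.
Proof. by have := hinner_ge0 x; rewrite lecE => /andP[]. Qed.

Lemma hinner_self x : hinner x x = (sqnorm x)%:C.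
Proof.
have := hinner_ge0 x; rewrite lecE /sqnorm /rinner.
by case: (hinner x x) => a b /andP[/eqP /= ->].
Qed.

Lemma sqnorm_eq0 x : sqnorm x = 0 -> x = 0.
Proof. by move=> x0; apply: hinner_eq0; rewrite hinner_self x0. Qed.

Lemma hnormE x : hnorm x = Num.sqrt (sqnorm x).
Proof. by []. Qed.

Lemma hnorm_sqr x : hnorm x ^+ 2 = sqnorm x.
Proof. exact/sqr_sqrtr/sqnorm_ge0. Qed.

Lemma hnorm_ge0 x : 0 <= hnorm x.
Proof. exact: sqrtr_ge0. Qed.

Lemma hnorm_gt0 x : x != 0 -> 0 < hnorm x.
Proof.
move=> x0; rewrite sqrtr_gt0 lt_neqAle sqnorm_ge0 andbT eq_sym.
by apply: contra x0 => /eqP/sqnorm_eq0 ->.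
Qed.

Lemma sqnormD x y : sqnorm (x + y) = sqnorm x + sqnorm y + 2 * rinner x y.
Proof. by rewrite /sqnorm rinnerDl !rinnerDr (rinnerC y x); ring. Qed.

Lemma sqnormN x : sqnorm (- x) = sqnorm x.
Proof. by rewrite /sqnorm rinnerNl rinnerNr opprK. Qed.

Lemma sqnormB x y : sqnorm (x - y) = sqnorm x + sqnorm y - 2 * rinner x y.
Proof. by rewrite sqnormD sqnormN rinnerNr; ring. Qed.

Lemma sqnormZ (r : R) x : sqnorm (r%:C *: x) = r ^+ 2 * sqnorm x.
Proof. by rewrite /sqnorm rinnerZl rinnerZr mulrA -expr2. Qed.

Lemma rinner_sqr_le x y : rinner x y ^+ 2 <= sqnorm x * sqnorm y.
Proof.
have [/sqnorm_eq0 ->|y0] := eqVneq (sqnorm y) 0.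
  by rewrite /rinner hinner0r expr0n /= mulr_ge0 ?sqnorm_ge0.
have ypos : 0 < sqnorm y by rewrite lt_neqAle eq_sym y0 sqnorm_ge0.
(* expand [0 <= sqnorm (x + r y)] at the minimizing [r] *)
pose r := - rinner x y / sqnorm y.
have := sqnorm_ge0 (x + r%:C *: y).
rewrite sqnormD sqnormZ rinnerZr -(pmulr_rge0 _ ypos).
suff -> : sqnorm y * (sqnorm x + r ^+ 2 * sqnorm y + 2 * (r * rinner x y)) =
          sqnorm x * sqnorm y - rinner x y ^+ 2 by rewrite subr_ge0.
by rewrite /r; field; rewrite y0.
Qed.

Lemma rinner_le x y : rinner x y <= hnorm x * hnorm y.
Proof.
rewrite -sqrtrM ?sqnorm_ge0 // (le_trans (ler_norm _)) // -sqrtr_sqr ler_sqrt //.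
  exact: rinner_sqr_le.
by rewrite mulr_ge0 ?sqnorm_ge0.
Qed.

Lemma hnormD_le x y : hnorm (x + y) <= hnorm x + hnorm y.
Proof.
rewrite hnormE -(ger0_norm (addr_ge0 (hnorm_ge0 x) (hnorm_ge0 y))) -sqrtr_sqr.
rewrite ler_sqrt ?sqr_ge0 // sqnormD sqrrD !hnorm_sqr.
by have := rinner_le x y; lra.
Qed.

Lemma hinner_eq0_approx z y :
  (forall e, 0 < e -> exists2 s, hinner z s = 0 & hnorm (y - s) < e) -> hinner z y = 0.
Proof.
move=> approx.
suff : complex.Re (conjc (hinner z y) * hinner z y) <= 0.
  case: (hinner z y) => a b /= ab; apply/eqP; rewrite eq_complex /=.
  by apply/andP; split; apply/eqP; nra.
(* c^* z, where c = <z, y>, is orthogonal to the approximants and <c^* z, y> = |c|^2 *)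
set w := conjc (hinner z y) *: z; apply/ler_addgt0Pr => e e0; rewrite add0r.
have w1 : 0 < hnorm w + 1 by rewrite ltr_wpDl ?hnorm_ge0.
have [s zs] := approx _ (divr_gt0 e0 w1); rewrite ltr_pdivlMr // => ys.
have -> : conjc (hinner z y) * hinner z y = hinner w (y - s).
  by rewrite hinnerZl hinnerBr zs subr0.
apply: le_trans (rinner_le w (y - s)) _.
by have := hnorm_ge0 w; have := hnorm_ge0 (y - s); nra.
Qed.

End InnerProduct.

Lemma ge0_quadratic_eq0 (R : realFieldType) (k c : R) :
  0 <= k -> (forall s, 2 * s * c <= s ^+ 2 * k) -> c = 0.
Proof.
move=> k0 quad; have k1 : 0 < k + 1 by lra.
have := quad (c / (k + 1)); rewrite -(ler_pM2l (exprn_gt0 2 k1)).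
have -> : (k + 1) ^+ 2 * (2 * (c / (k + 1)) * c) = 2 * c ^+ 2 * (k + 1).
  by field; rewrite gt_eqF.
have -> : (k + 1) ^+ 2 * ((c / (k + 1)) ^+ 2 * k) = c ^+ 2 * k.
  by field; rewrite gt_eqF.
move=> le_c; apply/eqP; rewrite -sqrf_eq0 eq_le sqr_ge0 andbT.
by have := sqr_ge0 c; nra.
Qed.

Lemma eventually_natSinv_lt (R : archiFieldType) (e : R) :
  0 < e -> exists N, forall n, (N <= n)%N -> n.+1%:R^-1 < e.
Proof.
move=> e0; have /archi_boundP eN : 0 <= e^-1 by rewrite invr_ge0 ltW.
exists (Num.bound e^-1) => n le_Nn; rewrite invf_plt ?posrE ?ltr0Sn //.
by rewrite (lt_le_trans eN) // ler_nat (leq_trans le_Nn).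
Qed.

Section Projection.
Variables (R : realType) (H : Hilb R) (V : set H).

Definition converges_to (u : nat -> H) (l : H) :=
  forall e : R, 0 < e -> exists N, forall n, (N <= n)%N -> hnorm (u n - l) < e.

Lemma orthproj_spec_of_witness x p :
  V p -> (forall v, V v -> hinner (x - p) v = 0) ->
  V (orthproj V x) /\ forall v, V v -> hinner (x - orthproj V x) v = 0.
Proof.
move=> Vp orth_p; exact: (epsilon_spec (inhabits (0 : H))
  (fun q => V q /\ forall v, V v -> hinner (x - q) v = 0) (ex_intro _ p (conj Vp orth_p))).
Qed.

Lemma orthproj_eq x p :
  V p -> (forall v, V v -> hinner (x - p) v = 0) -> orthproj V x = p.
Proof.
move=> Vp orth_p; have [Vq orth_q] := orthproj_spec_of_witness Vp orth_p.
set q := orthproj V x in Vq orth_q *.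
have orth_qp v : V v -> hinner (q - p) v = 0.
  move=> Vv; have -> : q - p = (x - p) - (x - q) by rewrite [RHS]addrC opprB addrA subrK.
  by rewrite hinnerBl orth_p ?orth_q ?subrr.
by apply/eqP; rewrite -subr_eq0; apply/eqP/hinner_eq0; rewrite hinnerBr !orth_qp ?subrr.
Qed.

Hypothesis closedV : closed_subspace V.

Lemma subspaceD a b : V a -> V b -> V (a + b).
Proof. by case: closedV => _ lin _ Va Vb; have := lin 1 a b Va Vb; rewrite scale1r. Qed.

Lemma subspaceZ c a : V a -> V (c *: a).
Proof. by case: closedV => V0 lin _ Va; have := lin c a 0 Va V0; rewrite addr0. Qed.

Lemma minimizer_orthogonal x p :
  V p -> (forall v, V v -> sqnorm (x - p) <= sqnorm (x - v)) ->
  forall v, V v -> hinner (x - p) v = 0.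
Proof.
move=> Vp min_p.
have rinner0 v : V v -> rinner (x - p) v = 0.
  move=> Vv; apply: (ge0_quadratic_eq0 (sqnorm_ge0 v)) => s.
  have := min_p _ (subspaceD (subspaceZ s%:C Vv) Vp).
  have -> : x - (s%:C *: v + p) = (x - p) - s%:C *: v by rewrite opprD addrA addrAC.
  by rewrite (sqnormB (x - p)) sqnormZ rinnerZr; lra.
(* Re <x - p, 'i v> = Im <x - p, v> *)
move=> v Vv; move: (rinner0 _ Vv) (rinner0 _ (subspaceZ 'i Vv)).
rewrite /rinner hinnerZr; case: (hinner _ v) => a b /= ->.
by rewrite mul0r mulN1r opprK add0r => ->.
Qed.

Lemma sqnorm_sub_le x d a b :
  (forall v, V v -> d <= sqnorm (x - v)) -> V a -> V b ->
  sqnorm (a - b) <= 2 * sqnorm (x - a) + 2 * sqnorm (x - b) - 4 * d.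
Proof.
move=> lb_d Va Vb; set m := (2^-1)%:C *: (a + b).
have := lb_d m (subspaceZ _ (subspaceD Va Vb)).
(* parallelogram law for x - a and x - b, whose half-sum is x - m *)
have half_sum : (x - a) + (x - b) = 2%:C *: (x - m).
  rewrite scalerBr scalerA -rmorphM mulfV ?pnatr_eq0 // scale1r rmorph_nat scaler_nat.
  by rewrite addrACA -opprD mulr2n.
have := sqnormD (x - a) (x - b); rewrite half_sum sqnormZ.
have -> : a - b = (x - b) - (x - a) by rewrite [RHS]addrC opprB addrA subrK.
by rewrite (sqnormB (x - b)) rinnerC; lra.
Qed.

Section MinimizingSequence.
Variables (x : H) (d : R) (u : nat -> H).
Hypothesis u_close : forall n, sqnorm (x - u n) < d + n.+1%:R^-1.

Lemma minimizing_cauchy :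
  (forall v, V v -> d <= sqnorm (x - v)) -> (forall n, V (u n)) ->
  forall e, 0 < e -> exists N, forall m n, (N <= m)%N -> (N <= n)%N ->
    hnorm (u m - u n) < e.
Proof.
move=> lb_d Vu e e0.
have [N inv_lt] : exists N, forall n, (N <= n)%N -> n.+1%:R^-1 < e ^+ 2 / 4.
  by apply: eventually_natSinv_lt; rewrite divr_gt0 ?exprn_gt0.
exists N => m n le_Nm le_Nn; rewrite hnormE -(ger0_norm (ltW e0)) -sqrtr_sqr.
rewrite ltr_sqrt ?exprn_gt0 //.
have := sqnorm_sub_le lb_d (Vu m) (Vu n).
have := u_close m; have := u_close n; have := inv_lt m le_Nm; have := inv_lt n le_Nn.
set E := e ^+ 2; set im := m.+1%:R^-1; set iN := n.+1%:R^-1; lra.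
Qed.

Lemma minimizing_limit l : 0 <= d -> converges_to u l -> sqnorm (x - l) <= d.
Proof.
move=> d0 u_l; suff : hnorm (x - l) <= Num.sqrt d.
  by rewrite -(ler_pXn2r (n := 2)) ?nnegrE ?hnorm_ge0 ?sqrtr_ge0 // hnorm_sqr sqr_sqrtr.
apply/ler_addgt0Pr => e e0; have e2 : 0 < e / 2 by rewrite divr_gt0.
have [N1 inv_lt] := eventually_natSinv_lt (exprn_gt0 2 e2).
have [N2 near_l] := u_l _ e2; set n := maxn N1 N2.
have near_x : hnorm (x - u n) < Num.sqrt d + e / 2.
  have pos := ltr_wpDl (sqrtr_ge0 d) e2.
  rewrite hnormE -(gtr0_norm pos) -sqrtr_sqr ltr_sqrt ?exprn_gt0 // sqrrD sqr_sqrtr //.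
  have := u_close n; have := inv_lt n (leq_maxl _ _).
  have := mulr_ge0 (sqrtr_ge0 d) (ltW e2).
  set q := e / 2; set s := Num.sqrt d; set i := n.+1%:R^-1; lra.
have := hnormD_le (x - u n) (u n - l); rewrite addrA subrK.
by have := near_l n (leq_maxr _ _); lra.
Qed.

End MinimizingSequence.

Lemma minimizer_exists x :
  exists2 p, V p & forall v, V v -> sqnorm (x - p) <= sqnorm (x - v).
Proof.
have V0 : V 0 by case: closedV.
pose D := [set sqnorm (x - v) | v in V].
have D_lb : has_lbound D by exists 0 => _ [v _ <-]; exact: sqnorm_ge0.
have D_inf : has_inf D by split=> //; exists (sqnorm (x - 0)), 0.
have lb_inf v : V v -> inf D <= sqnorm (x - v) by move=> Vv; apply: ge_inf => //; exists v.
have inf_ge0 : 0 <= inf D by apply: lb_le_inf D_inf.1 _ => _ [v _ <-]; exact: sqnorm_ge0.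
have /choice[u u_min] : forall n, exists v, V v /\ sqnorm (x - v) < inf D + n.+1%:R^-1.
  move=> n; have n_gt0 : 0 < n.+1%:R^-1 :> R by rewrite invr_gt0 ltr0Sn.
  by have [_ [v Vv <-] lt_v] := inf_adherent n_gt0 D_inf; exists v.
have Vu n : V (u n) by case: (u_min n).
have u_close n : sqnorm (x - u n) < inf D + n.+1%:R^-1 by case: (u_min n).
have [l u_l] := hinner_complete (minimizing_cauchy u_close lb_inf Vu).
exists l => [|v Vv]; first by case: closedV => _ _; apply; [exact: Vu | exact: u_l].
exact: le_trans (minimizing_limit u_close inf_ge0 u_l) (lb_inf v Vv).
Qed.

Lemma orthproj_spec x :
  V (orthproj V x) /\ forall v, V v -> hinner (x - orthproj V x) v = 0.
Proof.
have [p Vp min_p] := minimizer_exists x.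
exact: orthproj_spec_of_witness Vp (minimizer_orthogonal Vp min_p).
Qed.

End Projection.

Section TensorProjection.
Variables (R : realType) (H K HK : Hilb R) (t : H -> K -> HK).
Hypothesis tensor_t : is_tensor t.

Lemma hnorm_tensor f g : hnorm (t f g) = hnorm f * hnorm g.
Proof.
by rewrite !hnormE -sqrtrM ?sqnorm_ge0 // /sqnorm /rinner tensor_t.1 !hinner_self -rmorphM.
Qed.

Lemma orthproj_tensor (V : set H) (W : set K) f g :
  closed_subspace V -> closed_subspace W ->
  orthproj (tensor_subspace t V W) (t f g) = t (orthproj V f) (orthproj W g).
Proof.
move=> /orthproj_spec/(_ f)[VPf orth_f] /orthproj_spec/(_ g)[WPg orth_g].
apply: orthproj_eq => [e e0|y VWy].
  exists [:: (orthproj V f, orthproj W g)].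
  split=> [p|]; first by rewrite inE => /eqP ->.
  by rewrite big_seq1 subrr /hnorm hinner0l sqrtr0.
apply: hinner_eq0_approx => e /VWy[s [VWs ys]]; exists (\sum_(p <- s) t p.1 p.2) => //.
rewrite hinner_sumr big1_seq // => -[a b] /VWs[/= Va Wb].
move: (orth_f a Va) (orth_g b Wb); rewrite !hinnerBl => /subr0_eq f_a /subr0_eq g_b.
by rewrite !tensor_t.1 f_a g_b subrr.
Qed.

End TensorProjection.

Section ExtendedSums.
Variable R : realType.
Local Open Scope ereal_scope.

Lemma esum_ge_term (T : choiceType) (I : set T) (a : T -> \bar R) i :
  (forall j, I j -> 0 <= a j) -> I i -> a i <= \esum_(j in I) a j.
Proof.
move=> a0 Ii; apply: esum_ge; exists [set i]; last by rewrite fsbig_set1.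
by split=> [|j ->]; [exact: finite_set1 | ].
Qed.

Lemma ge0_esumZl (T : choiceType) (I : set T) (x : \bar R) (a : T -> \bar R) :
  0 <= x -> (forall i, 0 <= a i) ->
  \esum_(i in I) (x * a i) = x * \esum_(i in I) a i.
Proof.
move=> x0 a0; case: x x0 => [r | _ | //]; first rewrite lee_fin => r0.
  rewrite /esum -ereal_supZl //; last first.
    by apply/set0P; exists 0, set0; [exact: fsets_set0 | rewrite fsbig_set0].
  congr ereal_sup; rewrite image_comp; apply: eq_imagel => A [finA _] /=.
  by rewrite !fsbig_finite //= ge0_sume_distrr.
have [[i Ii ai]|all0] := pselect (exists2 i, I i & 0 < a i).
  rewrite gt0_mulye; last by apply: lt_le_trans ai (esum_ge_term _ Ii) => j _.
  have := @esum_ge_term _ I (fun j => +oo * a j) i (fun j _ => mule_ge0 le0y (a0 j)) Ii.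
  by rewrite gt0_mulye // leye_eq => /eqP.
have a_eq0 i : I i -> a i = 0.
  move=> Ii; apply/eqP; rewrite eq_le a0 andbT leNgt.
  by apply: contra_notN all0 => ?; exists i.
by rewrite !esum1 ?mule0 // => i /a_eq0 ->; rewrite mule0.
Qed.

Lemma esum_mul (T1 T2 : choiceType) (I : set T1) (J : set T2)
    (a : T1 -> \bar R) (b : T2 -> \bar R) :
  (forall i, 0 <= a i) -> (forall j, 0 <= b j) ->
  \esum_(k in I `*` J) (a k.1 * b k.2) = (\esum_(i in I) a i) * (\esum_(j in J) b j).
Proof.
move=> a0 b0; transitivity (\esum_(i in I) \esum_(j in J) (a i * b j)).
  by rewrite esum_esum // => i j _ _; exact: mule_ge0.
under eq_esum do rewrite ge0_esumZl // muleC.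
have Sb0 : 0 <= \esum_(j in J) b j by apply: esum_ge0.
by rewrite ge0_esumZl // muleC.
Qed.

End ExtendedSums.

Section FrameBounds.
Variable R : realType.
Local Open Scope ereal_scope.

Definition has_frame_bounds (X : Type) (n : X -> R) (s : X -> \bar R) :=
  exists A B : R, [/\ (0 < A)%R, (A <= B)%R &
    forall x, (A * n x)%:E <= s x /\ s x <= (B * n x)%:E].

Lemma has_frame_boundsZ (X : Type) (n : X -> R) (s : X -> \bar R) (m c : R) :
  (0 < m)%R -> (0 < c)%R ->
  has_frame_bounds (fun x => n x * m)%R (fun x => s x * c%:E) -> has_frame_bounds n s.
Proof.
move=> m0 c0 [A [B [A0 AB bnd]]]; exists (A * m / c)%R, (B * m / c)%R.
split=> [||x]; first by rewrite !divr_gt0 ?mulr_gt0.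
  by rewrite ler_pM2r ?invr_gt0 // ler_pM2r.
have scale D : (D * m / c * n x * c = D * (n x * m))%R by field; rewrite gt_eqF.
have [lo up] := bnd x.
by split; rewrite -(@lee_pmul2r _ c%:E) ?lte_fin // -EFinM scale.
Qed.

Lemma bounded_mule_factor (a b : \bar R) (l u : R) : (0 < l)%R -> 0 <= a -> 0 <= b ->
  l%:E <= a * b -> a * b <= u%:E -> exists2 c : R, b = c%:E & (0 < c)%R.
Proof.
move=> l0 a0 b0 lo up; case: b b0 lo up => [c | _ lo up | //].
  rewrite lee_fin => c0 lo up; exists c => //.
  rewrite lt_neqAle c0 andbT eq_sym; apply: contraTneq lo => ->.
  by rewrite mule0 lee_fin -ltNge.
move: a0 lo up; rewrite le_eqVlt => /orP[/eqP <-|a0].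
  by rewrite mul0e lee_fin leNgt l0.
by rewrite gt0_muley.
Qed.

Lemma has_frame_bounds_mulP (X Y : Type) (n1 : X -> R) (n2 : Y -> R)
    (s1 : X -> \bar R) (s2 : Y -> \bar R) :
  (forall x, 0 <= s1 x) -> (forall y, 0 <= s2 y) ->
  (forall x, 0 <= n1 x)%R -> (forall y, 0 <= n2 y)%R ->
  (exists x, 0 < n1 x)%R -> (exists y, 0 < n2 y)%R ->
  has_frame_bounds n1 s1 /\ has_frame_bounds n2 s2 <->
  exists A B : R, [/\ (0 < A)%R, (A <= B)%R & forall x y,
    (A * (n1 x * n2 y))%:E <= s1 x * s2 y /\ s1 x * s2 y <= (B * (n1 x * n2 y))%:E].
Proof.
move=> s1_ge0 s2_ge0 n1_ge0 n2_ge0 [x0 x0_gt0] [y0 y0_gt0]; split.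
  case=> -[A1 [B1 [A1_gt0 AB1 bnd1]]] [A2 [B2 [A2_gt0 AB2 bnd2]]].
  exists (A1 * A2)%R, (B1 * B2)%R; split=> [||x y]; first exact: mulr_gt0.
    by rewrite ler_pM // ltW.
  have [lo1 up1] := bnd1 x; have [lo2 up2] := bnd2 y.
  rewrite [(A1 * A2 * _)%R]mulrACA [(B1 * B2 * _)%R]mulrACA !EFinM.
  split; apply: lee_pmul => //;
    by [rewrite lee_fin mulr_ge0 // ltW | exact: le_trans lo1 | exact: le_trans lo2].
case=> A [B [A_gt0 AB bnd]].
have [lo0 up0] := bnd x0 y0; have lb_gt0 := mulr_gt0 A_gt0 (mulr_gt0 x0_gt0 y0_gt0).
have [c2 s2_y0 c2_gt0] := bounded_mule_factor lb_gt0 (s1_ge0 x0) (s2_ge0 y0) lo0 up0.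
rewrite muleC in lo0 up0.
have [c1 s1_x0 c1_gt0] := bounded_mule_factor lb_gt0 (s2_ge0 y0) (s1_ge0 x0) lo0 up0.
split.
  apply: (has_frame_boundsZ y0_gt0 c2_gt0); exists A, B; split=> // x.
  by rewrite -s2_y0; exact: bnd.
apply: (has_frame_boundsZ x0_gt0 c1_gt0); exists A, B; split=> // y.
by rewrite -s1_x0 muleC (mulrC (n2 y)); exact: bnd.
Qed.

End FrameBounds.

Section FusionSums.
Variables (R : realType) (H : Hilb R) (I : set int) (Hi : int -> Hilb R).
Variables (V : int -> set H) (Lam : forall i, {linear H -> Hi i}) (v : int -> R).

Definition fusion_sum (f : H) : \bar R :=
  (\esum_(i in I) (v i ^+ 2 * hnorm (Lam i (orthproj (V i) f)) ^+ 2)%:E)%E.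

Lemma fusion_sum_ge0 f : (0 <= fusion_sum f)%E.
Proof. by apply: esum_ge0 => i _; rewrite lee_fin mulr_ge0 ?sqr_ge0. Qed.

Lemma gfusion_frameE :
  gfusion_frame I V Lam v = has_frame_bounds (fun f => hnorm f ^+ 2) fusion_sum.
Proof. by []. Qed.

End FusionSums.

Section TensorFusionSum.
Variable R : realType.
Variables (H K HK : Hilb R) (t : H -> K -> HK) (I J : set int).
Variables (Hi Kj : int -> Hilb R) (HKij : int -> int -> Hilb R).
Variable tij : forall i j, Hi i -> Kj j -> HKij i j.
Arguments tij : clear implicits.
Variables (V : int -> set H) (W : int -> set K) (v w : int -> R).
Variables (Lam : forall i, {linear H -> Hi i}) (Gam : forall j, {linear K -> Kj j}).
Variable LG : forall i j, {linear HK -> HKij i j}.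
Hypothesis tensor_t : is_tensor t.
Hypothesis tensor_tij : forall i j, I i -> J j -> is_tensor (tij i j).
Hypothesis closedV : forall i, I i -> closed_subspace (V i).
Hypothesis closedW : forall j, J j -> closed_subspace (W j).
Hypothesis LG_tensor :
  forall i j, I i -> J j -> is_tensor_op t (tij i j) (Lam i) (Gam j) (LG i j).

Lemma tensor_fusion_sum f g :
  (\esum_(ij in I `*` J) ((v ij.1 * w ij.2) ^+ 2 *
     hnorm (LG ij.1 ij.2 (orthproj (tensor_subspace t (V ij.1) (W ij.2)) (t f g))) ^+ 2)%:E
  = fusion_sum I V Lam v f * fusion_sum J W Gam w g)%E.
Proof.
rewrite -esum_mul => [|i|j]; [|by rewrite lee_fin mulr_ge0 ?sqr_ge0..].
apply: eq_esum => -[i j] [/= Ii Jj] /=; rewrite -EFinM.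
rewrite orthproj_tensor //; [|exact: closedV | exact: closedW].
by rewrite (LG_tensor Ii Jj).2 (hnorm_tensor (tensor_tij Ii Jj)) !exprMn mulrACA.
Qed.

End TensorFusionSum.

Theorem theorem3p4 (R : realType)
  (H K HK : Hilb R) (t : H -> K -> HK)
  (I J : set int)
  (Hi Kj : int -> Hilb R) (HKij : int -> int -> Hilb R)
  (tij : forall i j, Hi i -> Kj j -> HKij i j)
  (V : int -> set H) (W : int -> set K)
  (Lam : forall i, {linear H -> Hi i}) (Gam : forall j, {linear K -> Kj j})
  (LG : forall i j, {linear HK -> HKij i j})
  (v w : int -> R) :
  separable H -> separable K ->
  (exists f : H, f != 0) -> (exists g : K, g != 0) ->
  is_tensor t ->
  (forall i j, I i -> J j -> is_tensor (tij i j)) ->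
  (forall i, I i -> closed_subspace (V i)) ->
  (forall j, J j -> closed_subspace (W j)) ->
  (forall i, I i -> bounded_op (Lam i)) ->
  (forall j, J j -> bounded_op (Gam j)) ->
  (forall i j, I i -> J j -> is_tensor_op t (tij i j) (Lam i) (Gam j) (LG i j)) ->
  (forall i, I i -> 0 < v i) ->
  (forall j, J j -> 0 < w j) ->
  (gfusion_frame I V Lam v /\ gfusion_frame J W Gam w) <->
  tensor_gfusion_frame t I J V W LG v w.
Proof.
move=> _ _ [f0 f0_neq0] [g0 g0_neq0] tensor_t tensor_tij closedV closedW _ _.
move=> LG_tensor _ _.
have sum_fg := tensor_fusion_sum v w tensor_t tensor_tij closedV closedW LG_tensor.
have norm_fg f g : hnorm (t f g) ^+ 2 = hnorm f ^+ 2 * hnorm g ^+ 2.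
  by rewrite hnorm_tensor // exprMn.
rewrite !gfusion_frameE has_frame_bounds_mulP; first last.
- by exists g0; rewrite exprn_gt0 ?hnorm_gt0.
- by exists f0; rewrite exprn_gt0 ?hnorm_gt0.
- by move=> g; exact: sqr_ge0.
- by move=> f; exact: sqr_ge0.
- by move=> g; exact: fusion_sum_ge0.
- by move=> f; exact: fusion_sum_ge0.
split=> -[A [B [A_gt0 AB bnd]]]; exists A, B; split=> // f g.
  by rewrite sum_fg norm_fg; exact: bnd.
by rewrite -sum_fg -norm_fg; exact: bnd.
Qed.
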